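(* Let $\beta<1$, let $\boldsymbol\theta\in\mathbb R^d$ and $\mathbf X^n=(\mathbf X_1,\dots,\mathbf X_n)\in(\mathbb R^d)^n$ be arbitrary deterministic values, and let $\mathbf W^n\sim\mathbb Q_{\boldsymbol\theta}=\mathbb Q_{\boldsymbol\theta,\beta,\mathbf A_n,\mathbf X^n}$. Let $m_i(\mathbf W^n)=\sum_{j\ne i}A_n(i,j)W_j$ and $C_1(\boldsymbol\theta,\mathbf X^n)=\sum_{i=1}^n\big[\sum_{j=1}^nA_n(i,j)\tanh(\boldsymbol\theta^\top\mathbf X_j)\big]^2$. Then, with constants depending only on $\beta$: (a) $\mathbb E^{\mathbb Q_{\boldsymbol\theta}}\big[\sum_{i=1}^nm_i^2(\mathbf W^n)\big]\lesssim n\alpha_n+C_1(\boldsymbol\theta,\mathbf X^n)$; (b) for every $\mathbf d=(d_1,\dots,d_n)\in\mathbb R^n$, $$\Big|\mathbb E^{\mathbb Q_{\boldsymbol\theta}}\sum_{i=1}^nd_i\big(W_i-\tanh(\boldsymbol\theta^\top\mathbf X_i)\big)\Big|\lesssim\|\mathbf d\|\big(1+\sqrt{n\alpha_n^2}+\sqrt{C_1(\boldsymbol\theta,\mathbf X^n)}\big).$$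
   Context: $\mathbf A_n$ is a symmetric $n\times n$ matrix with nonnegative entries and zero diagonal, with $\lim_n\|\mathbf A_n\|_\infty=1$ (maximum row sum tends to 1); $\alpha_n=\max_i\sum_jA_n(i,j)^2$. The random field Ising model $\mathbb Q_{\boldsymbol\theta,\beta,\mathbf A_n,\mathbf X^n}$ is the probability on $\{-1,1\}^n$ with $\mathbb Q(\mathbf w)\propto\exp\big(\frac\beta2\mathbf w^\top\mathbf A_n\mathbf w+\boldsymbol\theta^\top\sum_i\mathbf X_iw_i\big)$; $\mathbb E^{\mathbb Q_{\boldsymbol\theta}}$ is expectation under it. $\lesssim$ means inequality up to a multiplicative constant. *)

From HB Require Import structures.
From mathcomp Require Import all_boot all_order all_algebra.
From mathcomp Require Import all_classical all_reals all_analysis.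
Set Implicit Arguments. Unset Strict Implicit. Unset Printing Implicit Defensive.
Import Order.TTheory GRing.Theory Num.Theory.
Local Open Scope ring_scope.

Section RFIM.
Variable R : realType.

Definition tanh (x : R) : R := (expR x - expR (- x)) / (expR x + expR (- x)).

Definition spin (b : bool) : R := if b then 1 else -1.

(** configurations in {-1,1}^n, encoded as boolean finite functions *)
Definition config (n : nat) := {ffun 'I_n -> bool}.

Definition dotp (d : nat) (u v : 'rV[R]_d) : R := \sum_(k < d) u 0 k * v 0 k.

Definition infnorm (n : nat) (A : 'M[R]_n) : R :=
  \big[Num.max/0]_(i < n) \sum_(j < n) `|A i j|.

Definition alphaA (n : nat) (A : 'M[R]_n) : R :=
  \big[Num.max/0]_(i < n) \sum_(j < n) (A i j) ^+ 2.

Definition rfim_weight (n d : nat) (beta : R) (A : 'M[R]_n) (theta : 'rV[R]_d)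
    (X : 'I_n -> 'rV[R]_d) (w : config n) : R :=
  expR (beta / 2 * (\sum_(i < n) \sum_(j < n) spin (w i) * A i j * spin (w j))
        + \sum_(i < n) dotp theta (X i) * spin (w i)).

Definition rfim_E (n d : nat) (beta : R) (A : 'M[R]_n) (theta : 'rV[R]_d)
    (X : 'I_n -> 'rV[R]_d) (f : config n -> R) : R :=
  (\sum_(w : config n) rfim_weight beta A theta X w * f w)
  / (\sum_(w : config n) rfim_weight beta A theta X w).

Definition mloc (n : nat) (A : 'M[R]_n) (w : config n) (i : 'I_n) : R :=
  \sum_(j < n | j != i) A i j * spin (w j).

Definition C1 (n d : nat) (A : 'M[R]_n) (theta : 'rV[R]_d) (X : 'I_n -> 'rV[R]_d) : R :=
  \sum_(i < n) (\sum_(j < n) A i j * tanh (dotp theta (X j))) ^+ 2.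

Definition enorm (n : nat) (v : 'I_n -> R) : R := Num.sqrt (\sum_(i < n) v i ^+ 2).

Definition admissible (n : nat) (A : 'M[R]_n) : Prop :=
  A^T = A /\ (forall i j, 0 <= A i j) /\ (forall i, A i i = 0).

End RFIM.

(* Let [U_i = s_i - tanh (beta m_i + h_i)], with [h_i = theta^T X_i], be the
   residual of spin [i] given the other spins. Flipping spin [i] shows that
   [E (U_i g) = 0] whenever [g] does not depend on [s_i]; with the Lipschitz
   bound on [tanh] this gives [|E (U_j U_k)| <= 4 [j = k] + 2 beta A_jk], hence
   [E (A U)_i^2 <= 6 alpha_n]. Now [m = A (tanh (beta m + h) - tanh h) + A U
   + A tanh h], and the first term is at most [beta ||A||_oo |m| <= lam |m|]
   entrywise, with [lam = (1 + beta) / 2 < 1] for large [n]; absorbing it in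
   l^2 gives (a). For (b), a second-order Taylor expansion of [tanh] writes the
   bias [delta_i = E s_i - tanh h_i] as [beta (1 - tanh^2 h_i) (A delta
   + A tanh h)_i] up to [2 E m_i^2]; the same absorption bounds [||delta||],
   once the second moments [E m_i^2] are controlled by one more contraction
   argument, and (b) follows by Cauchy-Schwarz. *)

From HB Require Import structures.
From mathcomp Require Import all_boot all_order all_algebra.
From mathcomp Require Import all_classical all_reals all_analysis.
From mathcomp Require Import ring lra.
Set Implicit Arguments.
Unset Strict Implicit.
Unset Printing Implicit Defensive.
Import Order.TTheory GRing.Theory Num.Theory.
Import numFieldNormedType.Exports.
Local Open Scope classical_set_scope.
Local Open Scope ring_scope.

Section TanhFacts.
Variable R : realType.
Implicit Types x y z c : R.

Lemma tanh_expR x : tanh x = 1 - 2 / (expR x * expR x + 1).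
Proof.
rewrite /tanh expRN.
have ex_gt0 := expR_gt0 x.
have den_gt0 : 0 < expR x * expR x + 1 by rewrite addr_gt0 ?mulr_gt0.
by field; rewrite !gt_eqF.
Qed.

Lemma tanh0 : tanh (0 : R) = 0.
Proof. by rewrite /tanh oppr0 subrr mul0r. Qed.

Lemma is_derive_tanh x : is_derive x 1 (@tanh R) (1 - tanh x ^+ 2).
Proof.
pose p y : R := expR y * expR y + 1.
have p_gt0 y : 0 < p y by rewrite addr_gt0 ?mulr_gt0 ?expR_gt0.
have tanhE : @tanh R = cst 1 - 2 *: (fun y => (p y)^-1).
  by apply/funext => y; rewrite tanh_expR.
rewrite [in X in is_derive _ _ X _]tanhE.
have dp : is_derive x 1 p (expR x *: expR x + expR x *: expR x + 0).
  exact: (is_deriveD (f := expR * expR) (g := cst 1)).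
have dpV : is_derive x 1 (fun y => (p y)^-1)
    (- (p x) ^- 2 *: (expR x *: expR x + expR x *: expR x + 0)).
  have p_der : derivable p x 1 by [].
  apply: DeriveDef; first by apply: derivableV; rewrite ?gt_eqF.
  by rewrite deriveV ?gt_eqF // derive_val.
have := @is_deriveB R R R (cst 1) (2 *: (fun y => (p y)^-1)) x 1 _ _
  (is_derive_cst _ _ _) (@is_deriveZ _ _ _ _ 2 x 1 _ dpV).
congr is_derive; rewrite /= tanh_expR -/(p x) !scalerA /GRing.scale /=.
rewrite /p; field; rewrite gt_eqF //; exact: p_gt0.
Qed.

Lemma tanh_norm_le1 x : `|tanh x| <= 1.
Proof.
rewrite tanh_expR.
have den_ge1 : 1 <= expR x * expR x + 1 by rewrite lerDr mulr_ge0 ?expR_ge0.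
have q_gt0 : 0 < 2 / (expR x * expR x + 1) by rewrite divr_gt0 // (lt_le_trans ltr01).
have q_le2 : 2 / (expR x * expR x + 1) <= 2.
  by rewrite ler_pdivrMr ?(lt_le_trans ltr01) // ler_peMr.
rewrite ler_norml; apply/andP; split; lra.
Qed.

Lemma expR_mul1B_tanh x : expR x * (1 - tanh x) = expR (- x) * (1 + tanh x).
Proof.
have [ex ex'] := (expR_gt0 x, expR_gt0 (- x)).
by rewrite /tanh; field; rewrite gt_eqF ?addr_gt0.
Qed.

Lemma expR_spin_tanh_pair (b : bool) x :
  expR (spin R b * x) * (spin R b - tanh x)
  + expR (- spin R b * x) * (- spin R b - tanh x) = 0.
Proof.
by case: b; rewrite /spin ?mulN1r ?opprK ?mul1r expR_mul1B_tanh; ring.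
Qed.

Lemma ler_norm_sub_derive (f df : R -> R) (K x y : R) :
  (forall z, is_derive z 1 f (df z)) ->
  (forall z, `|z - x| <= `|y - x| -> `|df z| <= K) ->
  `|f y - f x| <= K * `|y - x|.
Proof.
move=> f_der df_le.
have f_cont a b : {within `[a, b], continuous f}.
  apply: derivable_within_continuous => z _; exact: @ex_derive _ _ _ _ _ _ _ (f_der z).
case: (ltrgtP x y) => [xy|yx|<-]; last by rewrite subrr normr0 mulr0.
- have [z /[!in_itv] /= /andP[xz zy] ->] := MVT xy (fun z _ => f_der z) (f_cont x y).
  have yx0 : 0 <= y - x by rewrite subr_ge0 ltW.
  rewrite normrM (ger0_norm yx0) ler_wpM2r //.
  by apply: df_le; rewrite !ger0_norm; lra.
- have [z /[!in_itv] /= /andP[yz zx] fyx] := MVT yx (fun z _ => f_der z) (f_cont y x).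
  have xy0 : 0 <= x - y by rewrite subr_ge0 ltW.
  rewrite distrC fyx normrM (ger0_norm xy0) ler_wpM2r //.
  by apply: df_le; rewrite ler0_norm ?ltr0_norm; lra.
Qed.

Lemma tanh_lipschitz x y : `|tanh y - tanh x| <= `|y - x|.
Proof.
rewrite -[leRHS]mul1r; apply: ler_norm_sub_derive (is_derive_tanh) _ => z _.
have := tanh_norm_le1 z; rewrite !ler_norml => /andP[? ?]; apply/andP; split; nra.
Qed.

Lemma tanh_norm_le y : `|tanh y| <= `|y|.
Proof. by have := tanh_lipschitz 0 y; rewrite tanh0 !subr0. Qed.

Lemma tanh_sub_id_le y : `|tanh y - y| <= y ^+ 2.
Proof.
have -> : y ^+ 2 = `|y| * `|y - 0| by rewrite subr0 -normrM -expr2 ger0_norm ?sqr_ge0.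
have -> : tanh y - y = (tanh y - y) - (tanh 0 - 0) by rewrite tanh0 !subr0.
apply: (@ler_norm_sub_derive (fun z => tanh z - z) (fun z => 1 - tanh z ^+ 2 - 1)).
  move=> z; exact: (@is_deriveB R R R (@tanh R) id z 1 _ _
                      (is_derive_tanh z) (is_derive_id _ _)).
move=> z; rewrite !subr0 => zy.
rewrite addrAC subrr add0r normrN normrX expr2.
apply: le_trans zy; apply: le_trans (tanh_norm_le z).
by rewrite ler_piMl // tanh_norm_le1.
Qed.

Lemma tanhD_sub c y : tanh (c + y) - tanh c = tanh y * (1 - tanh c * tanh (c + y)).
Proof.
rewrite !tanh_expR expRD.
have [ec ey] := (expR_gt0 c, expR_gt0 y).
have d1 : 0 < expR c * expR c + 1 by rewrite addr_gt0 ?mulr_gt0.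
have d2 : 0 < expR y * expR y + 1 by rewrite addr_gt0 ?mulr_gt0.
have d3 : 0 < expR c * expR y * (expR c * expR y) + 1 by rewrite addr_gt0 ?mulr_gt0.
by field; rewrite !gt_eqF.
Qed.

Lemma tanh_taylor c y :
  `|tanh (c + y) - tanh c - (1 - tanh c ^+ 2) * y| <= 2 * y ^+ 2.
Proof.
have := tanhD_sub c y; have := tanh_norm_le1 c; have := tanh_sub_id_le y.
have := tanh_norm_le y; have := tanh_lipschitz c (c + y).
rewrite addrAC subrr add0r.
move: (tanh (c + y)) (tanh c) (tanh y) => T t ty TtY tyY tyy t1 E.
have -> : T - t - (1 - t ^+ 2) * y = (1 - t ^+ 2) * (ty - y) - t * ty * (T - t).
  by rewrite {1}E; ring.
have t2 : `|1 - t ^+ 2| <= 1.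
  by move: t1; rewrite !ler_norml => /andP[? ?]; apply/andP; split; nra.
apply: le_trans (ler_normB _ _) _; rewrite !normrM.
have -> : 2 * y ^+ 2 = 1 * y ^+ 2 + 1 * `|y| * `|y|.
  by rewrite !mul1r -normrM -expr2 ger0_norm ?sqr_ge0 // mulr2n mulrDl mul1r.
by apply: lerD; rewrite ?ler_pM.
Qed.

End TanhFacts.

Section SquareBounds.
Variable R : realFieldType.
Implicit Types p q lam : R.

Lemma sqrD_le2 p q : (p + q) ^+ 2 <= 2 * (p ^+ 2 + q ^+ 2).
Proof. have := sqr_ge0 (p - q); nra. Qed.

Lemma sqrD_le_convex p q lam :
  0 < lam < 1 -> (p + q) ^+ 2 <= p ^+ 2 / lam + q ^+ 2 / (1 - lam).
Proof.
move=> /andP[lam_gt0 lam_lt1]; have lam'_gt0 : 0 < 1 - lam by rewrite subr_gt0.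
rewrite -subr_ge0 (_ : _ - _ = (p * (1 - lam) - q * lam) ^+ 2 / (lam * (1 - lam))).
  by rewrite divr_ge0 ?sqr_ge0 // mulr_ge0 // ltW.
by field; rewrite !gt_eqF.
Qed.

Lemma ler_sqr_norm p q : `|p| <= q -> p ^+ 2 <= q ^+ 2.
Proof. by move=> pq; have := normr_ge0 p; rewrite -real_normK ?num_real //; nra. Qed.

End SquareBounds.

Section FiniteSums.
Variables (R : realFieldType) (n : nat).
Implicit Types (x y z f g w : 'I_n -> R).

Lemma sqr_sum_le_pairwise x (P : 'I_n -> 'I_n -> R) :
  (forall j k, 2 * (x j * x k) <= P j k + P k j) ->
  (\sum_(j < n) x j) ^+ 2 <= \sum_(j < n) \sum_(k < n) P j k.
Proof.
move=> xP.
have -> : (\sum_(j < n) x j) ^+ 2 = \sum_(j < n) \sum_(k < n) x j * x k.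
  by rewrite expr2 mulr_suml; apply: eq_bigr => j _; rewrite mulr_sumr.
have sym : \sum_(j < n) \sum_(k < n) P k j = \sum_(j < n) \sum_(k < n) P j k.
  exact: exchange_big.
have : 2 * \sum_(j < n) \sum_(k < n) x j * x k <=
       \sum_(j < n) \sum_(k < n) P j k + \sum_(j < n) \sum_(k < n) P k j.
  rewrite -big_split mulr_sumr; apply: ler_sum => j _.
  by rewrite -big_split mulr_sumr; apply: ler_sum => k _; apply: xP.
rewrite sym; lra.
Qed.

Lemma weighted_cauchy_schwarz w f : (forall j, 0 <= w j) ->
  (\sum_(j < n) w j * f j) ^+ 2 <= (\sum_(j < n) w j) * (\sum_(j < n) w j * f j ^+ 2).
Proof.
move=> w_ge0; rewrite mulr_suml.
under [leRHS]eq_bigr do rewrite mulr_sumr.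
apply: (sqr_sum_le_pairwise (P := fun j k => w j * (w k * f k ^+ 2))) => j k.
rewrite -subr_ge0 (_ : _ - _ = w j * w k * (f j - f k) ^+ 2); last by ring.
by rewrite mulr_ge0 ?sqr_ge0 ?mulr_ge0 ?w_ge0.
Qed.

Lemma cauchy_schwarz f g :
  (\sum_(j < n) f j * g j) ^+ 2 <= (\sum_(j < n) f j ^+ 2) * (\sum_(j < n) g j ^+ 2).
Proof.
rewrite mulr_suml.
under [leRHS]eq_bigr do rewrite mulr_sumr.
apply: (sqr_sum_le_pairwise (P := fun j k => f j ^+ 2 * g k ^+ 2)) => j k.
by rewrite -subr_ge0 (_ : _ - _ = (f j * g k - f k * g j) ^+ 2) ?sqr_ge0 //; ring.
Qed.

(* Split [(|z i| + |y i|)^2] with weights [lam] and [1 - lam]; the [z] part is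
   then absorbed into the left-hand side. *)
Lemma sum_sqr_le_contraction x z y (lam : R) : 0 < lam < 1 ->
  (forall i, `|x i| <= `|z i| + `|y i|) ->
  \sum_(i < n) z i ^+ 2 <= lam ^+ 2 * \sum_(i < n) x i ^+ 2 ->
  \sum_(i < n) x i ^+ 2 <= (\sum_(i < n) y i ^+ 2) / (1 - lam) ^+ 2.
Proof.
move=> lam01 xzy zx; have /andP[lam_gt0 lam_lt1] := lam01.
have lam'_gt0 : 0 < 1 - lam by rewrite subr_gt0.
have split_x : \sum_i x i ^+ 2 <=
    (\sum_i z i ^+ 2) / lam + (\sum_i y i ^+ 2) / (1 - lam).
  rewrite !mulr_suml -big_split; apply: ler_sum => i _.
  have := sqrD_le_convex `|z i| `|y i| lam01; rewrite !real_normK ?num_real //.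
  apply: le_trans; rewrite -[leLHS]real_normK ?num_real //.
  by have := xzy i; have := normr_ge0 (x i); nra.
move: split_x zx; set X := \sum_i x i ^+ 2; set Y := \sum_i y i ^+ 2.
set Z := \sum_i z i ^+ 2 => split_x zx.
have Z_le : Z / lam <= lam * X by rewrite ler_pdivrMr // mulrAC -expr2.
have : X * (1 - lam) <= Y / (1 - lam) by nra.
rewrite ler_pdivlMr // => XY.
by rewrite ler_pdivlMr ?exprn_gt0 // expr2 mulrA.
Qed.

End FiniteSums.

Section GibbsDefinitions.
Variables (R : realType) (n : nat) (beta : R) (A : 'M[R]_n) (h : 'I_n -> R).
Implicit Types (w : config n) (f : config n -> R).

Definition spin_at w i : R := spin R (w i).

(* The weight of [rfim_E] for an arbitrary external field [h]: [rfim_E beta A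
   theta X] is [gibbsE beta A (fun i => dotp theta (X i))] by conversion. *)
Definition energy w : R :=
  beta / 2 * (\sum_(i < n) \sum_(j < n) spin_at w i * A i j * spin_at w j)
  + \sum_(i < n) h i * spin_at w i.

Definition gibbsE f : R :=
  (\sum_w expR (energy w) * f w) / \sum_w expR (energy w).

Definition flip_at i w : config n := [ffun j => if j == i then ~~ w j else w j].

Definition local_field w i : R := \sum_(j < n) A i j * spin_at w j.

Definition local_field_without w i j : R := \sum_(l < n | l != j) A i l * spin_at w l.

Definition cond_mean w i : R := tanh (beta * local_field w i + h i).

Definition residual w i : R := spin_at w i - cond_mean w i.

Definition energy_without i w : R :=
  beta / 2 * (\sum_(j < n | j != i) \sum_(k < n | k != i)
                spin_at w j * A j k * spin_at w k)
  + \sum_(j < n | j != i) h j * spin_at w j.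

End GibbsDefinitions.
Arguments spin_at {R n} w i.

Section GibbsMeasure.
Context {R : realType} {n : nat} {beta : R} {A : 'M[R]_n} {h : 'I_n -> R}.
Implicit Types (w : config n) (f g : config n -> R) (i j : 'I_n) (k : R).

Local Notation H := (energy beta A h).
Local Notation E := (gibbsE beta A h).
Local Notation m := (local_field A).
Local Notation U := (residual beta A h).

Lemma partition_gt0 : 0 < \sum_w expR (H w).
Proof.
rewrite (bigD1 [ffun=> true]) //= ltr_pwDl ?expR_gt0 //.
by rewrite sumr_ge0 // => w _; rewrite expR_ge0.
Qed.

Lemma gibbsE_ext f g : f =1 g -> E f = E g.
Proof. by move=> fg; rewrite /gibbsE; congr (_ / _); apply: eq_bigr => w _; rewrite fg. Qed.

Lemma gibbsED f g : E (fun w => f w + g w) = E f + E g.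
Proof.
rewrite /gibbsE -mulrDl -big_split; congr (_ / _).
by apply: eq_bigr => w _; rewrite mulrDr.
Qed.

Lemma gibbsEZ k f : E (fun w => k * f w) = k * E f.
Proof.
rewrite /gibbsE mulrA mulr_sumr; congr (_ / _).
by apply: eq_bigr => w _; rewrite mulrCA.
Qed.

Lemma gibbsEN f : E (fun w => - f w) = - E f.
Proof. by rewrite -mulN1r -gibbsEZ; apply: gibbsE_ext => w; rewrite mulN1r. Qed.

Lemma gibbsEB f g : E (fun w => f w - g w) = E f - E g.
Proof. by rewrite gibbsED gibbsEN. Qed.

Lemma gibbsE_sum (F : 'I_n -> config n -> R) :
  E (fun w => \sum_(i < n) F i w) = \sum_(i < n) E (F i).
Proof.
rewrite /gibbsE -mulr_suml; congr (_ / _); under eq_bigr do rewrite mulr_sumr.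
exact: exchange_big.
Qed.

Lemma gibbsE_cst k : E (fun=> k) = k.
Proof. by rewrite /gibbsE -mulr_suml mulrC mulKf // gt_eqF // partition_gt0. Qed.

Lemma ler_gibbsE f g : (forall w, f w <= g w) -> E f <= E g.
Proof.
move=> fg; apply: ler_wpM2r; first by rewrite invr_ge0 ltW // partition_gt0.
by apply: ler_sum => w _; apply: ler_wpM2l; rewrite ?expR_ge0.
Qed.

Lemma norm_gibbsE_le f : `|E f| <= E (fun w => `|f w|).
Proof.
rewrite ler_norml -gibbsEN; apply/andP; split; apply: ler_gibbsE => w.
  by rewrite lerNl -normrN ler_norm.
exact: ler_norm.
Qed.

Lemma gibbsE_ge0 f : (forall w, 0 <= f w) -> 0 <= E f.
Proof. by move=> f_ge0; rewrite -(gibbsE_cst 0) ler_gibbsE. Qed.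

Lemma flip_atK i : involutive (flip_at i).
Proof. by move=> w; apply/ffunP => j; rewrite !ffunE; case: eqP => // _; rewrite negbK. Qed.

Lemma spin_flip_at i w : spin_at (flip_at i w) i = - spin_at w i :> R.
Proof. by rewrite /spin_at ffunE eqxx; case: (w i); rewrite /spin ?opprK. Qed.

Lemma spin_flip_at_neq i j w : j != i -> spin_at (flip_at i w) j = spin_at w j :> R.
Proof. by move=> ji; rewrite /spin_at ffunE (negbTE ji). Qed.

Lemma norm_spin_at w i : `|spin_at w i : R| = 1.
Proof. by rewrite /spin_at /spin; case: (w i); rewrite ?normrN normr1. Qed.

Lemma local_field_split w i j :
  m w i = local_field_without A w i j + A i j * spin_at w j.
Proof. by rewrite /local_field (bigD1 j) //= addrC. Qed.

Lemma local_field_without_flip w i j :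
  local_field_without A (flip_at j w) i j = local_field_without A w i j.
Proof. by apply: eq_bigr => l lj; rewrite spin_flip_at_neq. Qed.

Lemma norm_residual_le2 w i : `|U w i| <= 2.
Proof.
apply: le_trans (ler_normB _ _) _; rewrite norm_spin_at.
by have := tanh_norm_le1 (beta * m w i + h i); rewrite /cond_mean; lra.
Qed.

Hypothesis A_sym : forall i j, A i j = A j i.
Hypothesis A_diag : forall i, A i i = 0.

Lemma local_field_flip w i : m (flip_at i w) i = m w i.
Proof. by rewrite !(local_field_split _ i i) A_diag !mul0r local_field_without_flip. Qed.

Lemma energy_without_flip i w :
  energy_without beta A h i (flip_at i w) = energy_without beta A h i w.
Proof.
rewrite /energy_without; congr (_ * _ + _); last first.
  by apply: eq_bigr => j ji; rewrite spin_flip_at_neq.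
by apply: eq_bigr => j ji; apply: eq_bigr => k ki; rewrite !spin_flip_at_neq.
Qed.

Lemma energy_split i w : H w =
  energy_without beta A h i w + spin_at w i * (beta * m w i + h i).
Proof.
have row_i : \sum_(k < n) spin_at w i * A i k * spin_at w k = spin_at w i * m w i.
  by rewrite /local_field mulr_sumr; apply: eq_bigr => k _; rewrite mulrA.
have col_i : \sum_(j < n | j != i) spin_at w j * A j i * spin_at w i =
             spin_at w i * m w i.
  rewrite (local_field_split w i i) A_diag mul0r addr0 mulr_sumr.
  by apply: eq_bigr => j _; rewrite (A_sym j i); ring.
have quad : \sum_(j < n) \sum_(k < n) spin_at w j * A j k * spin_at w k =
    \sum_(j < n | j != i) \sum_(k < n | k != i) spin_at w j * A j k * spin_at w k
    + 2 * (spin_at w i * m w i).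
  rewrite (bigD1 i) //= row_i.
  under eq_bigr => j _ do rewrite (bigD1 i) //=.
  by rewrite big_split /= col_i; ring.
have lin : \sum_(j < n) h j * spin_at w j =
    \sum_(j < n | j != i) h j * spin_at w j + h i * spin_at w i.
  by rewrite (bigD1 i) //= addrC.
by rewrite /energy /energy_without quad lin; field.
Qed.

(* Flipping spin [i] pairs [w] with [flip_at i w]; the weights of a pair
   are in the ratio that makes the residual of spin [i] average to zero. *)
Lemma gibbsE_residual_mul i g : (forall w, g (flip_at i w) = g w) ->
  E (fun w => U w i * g w) = 0.
Proof.
move=> g_flip; rewrite /gibbsE.
set F := fun w => expR (H w) * (U w i * g w).
suff -> : \sum_w F w = 0 by rewrite mul0r.
have F_flip w : F w + F (flip_at i w) = 0.
  rewrite /F /residual /cond_mean !(energy_split i) energy_without_flip.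
  rewrite spin_flip_at local_field_flip g_flip.
  have := expR_spin_tanh_pair (w i) (beta * m w i + h i).
  rewrite -/(spin_at w i).
  move: (spin_at w i) (beta * m w i + h i) (energy_without beta A h i w) (g w).
  by move=> s x e G pair; rewrite !expRD -(mulr0 (expR e * G)) -pair; ring.
have : \sum_w F w = \sum_w F (flip_at i w).
  by apply: reindex_inj; apply: inv_inj; exact: flip_atK.
have : \sum_w F w + \sum_w F (flip_at i w) = 0.
  by rewrite -big_split; apply: big1 => w _; apply: F_flip.
lra.
Qed.

End GibbsMeasure.

Section MomentBounds.
Variables (R : realType) (n : nat) (beta : R) (A : 'M[R]_n) (h : 'I_n -> R).
Hypothesis A_sym : forall i j, A i j = A j i.
Hypothesis A_diag : forall i, A i i = 0.
Hypothesis A_ge0 : forall i j, 0 <= A i j.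
Hypothesis beta_ge0 : 0 <= beta.

Local Notation E := (gibbsE beta A h).
Local Notation m := (local_field A).
Local Notation U := (residual beta A h).

(* Dropping spin [j] from [m w k] moves the conditional mean of spin [k] by at
   most [beta A k j], and the modified mean is uncorrelated with [U j]. *)
Lemma residual_cov_neq j k : j != k -> `|E (fun w => U w j * U w k)| <= 2 * beta * A k j.
Proof.
move=> jk.
pose g w := tanh (beta * local_field_without A w k j + h k).
have split_U w : U w j * U w k =
    U w j * (spin_at w k - g w) - U w j * (cond_mean beta A h w k - g w).
  by rewrite /residual; ring.
rewrite (gibbsE_ext split_U) gibbsEB gibbsE_residual_mul //; last first.
  by move=> w; rewrite spin_flip_at_neq 1?eq_sym // /g local_field_without_flip.
rewrite sub0r normrN; apply: le_trans (norm_gibbsE_le _) _.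
apply: le_trans (_ : E (fun=> 2 * beta * A k j) <= _); last by rewrite gibbsE_cst.
apply: ler_gibbsE => w.
rewrite normrM -mulrA ler_pM ?norm_residual_le2 //.
apply: le_trans (tanh_lipschitz _ _) _.
have -> : beta * m w k + h k - (beta * local_field_without A w k j + h k) =
          beta * (A k j * spin_at w j) by rewrite (local_field_split w k j); ring.
by rewrite !normrM norm_spin_at mulr1 !ger0_norm.
Qed.

Lemma residual_cov_le j k :
  `|E (fun w => U w j * U w k)| <= (j == k)%:R * 4 + 2 * beta * A j k.
Proof.
case: (eqVneq j k) => [<-|jk]; last by rewrite mul0r add0r A_sym residual_cov_neq.
apply: le_trans (norm_gibbsE_le _) _.
apply: le_trans (_ : E (fun=> 4) <= _); last first.
  by rewrite gibbsE_cst mul1r lerDl !mulr_ge0.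
apply: ler_gibbsE => w; rewrite normrM.
have Uj : `|U w j| <= 2 := norm_residual_le2 w j.
by have := normr_ge0 (U w j); nra.
Qed.

Definition field_residual w i : R := \sum_(j < n) A i j * U w j.

Lemma gibbsE_field_residual_sqr_le_cov i : E (fun w => field_residual w i ^+ 2) <=
  4 * \sum_(j < n) A i j ^+ 2 + 2 * beta * \sum_(j < n) \sum_(k < n) A i j * A i k * A j k.
Proof.
have expand w : field_residual w i ^+ 2 =
    \sum_(j < n) \sum_(k < n) (A i j * A i k) * (U w j * U w k).
  rewrite expr2 /field_residual mulr_suml; apply: eq_bigr => j _; rewrite mulr_sumr.
  by apply: eq_bigr => k _; ring.
rewrite (gibbsE_ext expand) gibbsE_sum.
apply: le_trans (_ : _ <= \sum_(j < n) \sum_(k < n)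
    (A i j * A i k) * ((j == k)%:R * 4 + 2 * beta * A j k)) _.
  apply: ler_sum => j _; rewrite gibbsE_sum; apply: ler_sum => k _.
  rewrite gibbsEZ; apply: le_trans (ler_norm _) _.
  by rewrite normrM ger0_norm ?mulr_ge0 // ler_wpM2l ?mulr_ge0 ?residual_cov_le.
rewrite mulr_sumr mulr_sumr -big_split /=; apply: ler_sum => j _.
rewrite (eq_bigr (fun k => A i j * A i k * ((j == k)%:R * 4)
                           + 2 * beta * (A i j * A i k * A j k))); last by move=> k _; ring.
rewrite big_split /= -mulr_sumr lerD2r (bigD1 j) //= big1 ?addr0.
  by rewrite eqxx mul1r expr2 mulrC.
by move=> k kj; rewrite eq_sym (negbTE kj) mul0r mulr0.
Qed.

Variables (a alpha lam : R).
Hypothesis row_sum_le : forall i, \sum_(j < n) A i j <= a.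
Hypothesis row_sqr_sum_le : forall i, \sum_(j < n) A i j ^+ 2 <= alpha.
Hypothesis a_ge0 : 0 <= a.
Hypothesis alpha_ge0 : 0 <= alpha.
Hypothesis lam01 : 0 < lam < 1.
Hypothesis beta_a_le : beta * a <= lam.

Let lam_gt0 : 0 < lam. Proof. by case/andP: lam01. Qed.
Let lam'_gt0 : 0 < 1 - lam. Proof. by case/andP: lam01; rewrite subr_gt0. Qed.

Lemma col_sum_le j : \sum_(i < n) A i j <= a.
Proof. by under eq_bigr do rewrite A_sym; exact: row_sum_le. Qed.

Lemma triangle_sum_le i :
  \sum_(j < n) \sum_(k < n) A i j * A i k * A j k <= a * alpha.
Proof.
apply: le_trans (_ : _ <= \sum_(j < n) A i j * alpha) _; last first.
  by rewrite -mulr_suml ler_wpM2r ?row_sum_le.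
apply: ler_sum => j _; under eq_bigr do rewrite -mulrA; rewrite -mulr_sumr ler_wpM2l //.
apply: le_trans (_ : _ <= \sum_(k < n) (A i k ^+ 2 + A j k ^+ 2) / 2) _.
  by apply: ler_sum => k _; have := sqr_ge0 (A i k - A j k); nra.
by rewrite -mulr_suml big_split /=; have := row_sqr_sum_le i; have := row_sqr_sum_le j; lra.
Qed.

Lemma gibbsE_field_residual_sqr_le i : E (fun w => field_residual w i ^+ 2) <= 6 * alpha.
Proof.
apply: le_trans (gibbsE_field_residual_sqr_le_cov i) _.
have beta_tri : beta * (\sum_(j < n) \sum_(k < n) A i j * A i k * A j k) <= alpha.
  apply: le_trans (ler_wpM2l beta_ge0 (triangle_sum_le i)) _.
  by rewrite mulrA ler_piMl // (le_trans beta_a_le) //; case/andP: lam01 => _ /ltW.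
by have := row_sqr_sum_le i; lra.
Qed.

Lemma sum_sqr_matrix_le (f : 'I_n -> R) :
  \sum_(i < n) (\sum_(j < n) A i j * f j) ^+ 2 <= a ^+ 2 * \sum_(j < n) f j ^+ 2.
Proof.
apply: le_trans (_ : _ <= \sum_(i < n) a * \sum_(j < n) A i j * f j ^+ 2) _.
  apply: ler_sum => i _; apply: le_trans (weighted_cauchy_schwarz f (A_ge0 i)) _.
  by rewrite ler_wpM2r ?row_sum_le // sumr_ge0 // => j _; rewrite mulr_ge0 ?sqr_ge0.
rewrite -mulr_sumr exchange_big /= expr2 -mulrA ler_wpM2l // mulr_sumr.
by apply: ler_sum => j _; rewrite -mulr_suml ler_wpM2r ?sqr_ge0 ?col_sum_le.
Qed.

Definition mean_field i : R := \sum_(j < n) A i j * tanh (h j).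

Definition field_drift w i : R :=
  \sum_(j < n) A i j * (cond_mean beta A h w j - tanh (h j)).

Lemma local_field_decomp w i :
  m w i = field_drift w i + (field_residual w i + mean_field i).
Proof.
rewrite /local_field /field_drift /field_residual /mean_field -!big_split.
by apply: eq_bigr => j _; rewrite /residual /=; ring.
Qed.

Lemma norm_field_drift_le w i :
  `|field_drift w i| <= \sum_(j < n) A i j * (beta * `|m w j|).
Proof.
apply: le_trans (ler_norm_sum _ _ _) _; apply: ler_sum => j _.
rewrite normrM ger0_norm // ler_wpM2l // /cond_mean.
by apply: le_trans (tanh_lipschitz _ _) _; rewrite addrK normrM ger0_norm.
Qed.

Lemma sum_field_drift_sqr_le w :
  \sum_(i < n) field_drift w i ^+ 2 <= lam ^+ 2 * \sum_(i < n) m w i ^+ 2.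
Proof.
apply: le_trans (_ : _ <= \sum_(i < n) (\sum_(j < n) A i j * (beta * `|m w j|)) ^+ 2) _.
  by apply: ler_sum => i _; apply: ler_sqr_norm; apply: norm_field_drift_le.
apply: le_trans (sum_sqr_matrix_le _) _.
under eq_bigr do rewrite exprMn real_normK ?num_real //.
rewrite -mulr_sumr mulrA; apply: ler_wpM2r; first by rewrite sumr_ge0 // => j _; rewrite sqr_ge0.
by rewrite -exprMn mulrC ler_sqr_norm // ger0_norm ?mulr_ge0.
Qed.

Lemma sum_local_field_sqr_le w : \sum_(i < n) m w i ^+ 2 <=
  2 * (\sum_(i < n) field_residual w i ^+ 2 + \sum_(i < n) mean_field i ^+ 2) / (1 - lam) ^+ 2.
Proof.
apply: le_trans (sum_sqr_le_contraction lam01 _ (sum_field_drift_sqr_le w)) _.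
  by move=> i; rewrite local_field_decomp; apply: ler_normD.
apply: ler_wpM2r; first by rewrite invr_ge0 exprn_ge0 // ltW.
by rewrite -big_split mulr_sumr; apply: ler_sum => i _; exact: sqrD_le2.
Qed.



Lemma gibbsE_sum_local_field_sqr_le :
  E (fun w => \sum_(i < n) m w i ^+ 2) <=
  12 / (1 - lam) ^+ 2 * (n%:R * alpha + \sum_(i < n) mean_field i ^+ 2).
Proof.
set C := \sum_(i < n) mean_field i ^+ 2; set D := 2 / (1 - lam) ^+ 2.
have D_ge0 : 0 <= D by rewrite divr_ge0 ?exprn_ge0 ?ltW.
have C_ge0 : 0 <= C by rewrite sumr_ge0 // => i _; rewrite sqr_ge0.
have pointwise w : \sum_(i < n) m w i ^+ 2 <=
    D * \sum_(i < n) field_residual w i ^+ 2 + D * C.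
  by apply: (le_trans (sum_local_field_sqr_le w)); rewrite /D -mulrDr mulrAC.
apply: le_trans (ler_gibbsE pointwise) _.
rewrite gibbsED gibbsEZ gibbsE_sum gibbsE_cst -mulrDr.
have sum_E : \sum_(i < n) E (fun w => field_residual w i ^+ 2) <= n%:R * (6 * alpha).
  rewrite mulr_natl -[n in _ *+ n]card_ord -sumr_const.
  by apply: ler_sum => i _; exact: gibbsE_field_residual_sqr_le.
have -> : 12 / (1 - lam) ^+ 2 = D * 6 by rewrite /D mulrAC -natrM.
rewrite -mulrA ler_wpM2l //.
have : 0 <= n%:R * alpha :> R by rewrite mulr_ge0.
lra.
Qed.

Hypothesis beta_le1 : beta <= 1.
Hypothesis a_le2 : a <= 2.

Definition second_moment i : R := E (fun w => m w i ^+ 2).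

Lemma second_moment_ge0 i : 0 <= second_moment i.
Proof. by apply: gibbsE_ge0 => w; exact: sqr_ge0. Qed.

Lemma field_drift_sqr_le w i :
  field_drift w i ^+ 2 <= a * beta ^+ 2 * \sum_(j < n) A i j * m w j ^+ 2.
Proof.
apply: le_trans (ler_sqr_norm (norm_field_drift_le w i)) _.
apply: le_trans (weighted_cauchy_schwarz _ (A_ge0 i)) _.
rewrite -mulrA; apply: ler_pM; first by apply: sumr_ge0 => j _; exact: A_ge0.
- by apply: sumr_ge0 => j _; rewrite mulr_ge0 ?sqr_ge0.
- exact: row_sum_le.
by rewrite mulr_sumr; apply: ler_sum => j _; rewrite exprMn real_normK ?num_real // mulrCA.
Qed.

(* The drift is bounded through [m^2] itself and not through [|m|], giving
   a linear inequality between the second moments. *)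
Lemma local_field_sqr_le w i : m w i ^+ 2 <=
  a * beta ^+ 2 / lam * \sum_(j < n) A i j * m w j ^+ 2
  + 2 / (1 - lam) * (field_residual w i ^+ 2 + mean_field i ^+ 2).
Proof.
rewrite [in leLHS]local_field_decomp; apply: le_trans (sqrD_le_convex _ _ lam01) _.
apply: lerD; rewrite [leRHS]mulrAC; apply: ler_wpM2r.
- by rewrite invr_ge0 ltW.
- exact: field_drift_sqr_le.
- by rewrite invr_ge0 ltW.
- exact: sqrD_le2.
Qed.

Lemma second_moment_le i : second_moment i <=
  a * beta ^+ 2 / lam * \sum_(j < n) A i j * second_moment j
  + 2 / (1 - lam) * (E (fun w => field_residual w i ^+ 2) + mean_field i ^+ 2).
Proof.
apply: le_trans (ler_gibbsE (local_field_sqr_le ^~ i)) _.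
rewrite gibbsED !gibbsEZ gibbsED gibbsE_cst gibbsE_sum lerD2r.
apply: ler_wpM2l; first by rewrite !mulr_ge0 ?sqr_ge0 // invr_ge0 ltW.
by apply: ler_sum => j _; rewrite gibbsEZ.
Qed.

Lemma norm_mean_field_le i : `|mean_field i| <= a.
Proof.
apply: le_trans (ler_norm_sum _ _ _) (le_trans _ (row_sum_le i)).
apply: ler_sum => j _; rewrite normrM ger0_norm // ler_piMr //; exact: tanh_norm_le1.
Qed.

Lemma moment_source_sqr_le i :
  (2 / (1 - lam) * (E (fun w => field_residual w i ^+ 2) + mean_field i ^+ 2)) ^+ 2
  <= 288 / (1 - lam) ^+ 2 * (alpha ^+ 2 + mean_field i ^+ 2).
Proof.
have e_ge0 : 0 <= E (fun w => field_residual w i ^+ 2).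
  by apply: gibbsE_ge0 => w; exact: sqr_ge0.
have e_le := gibbsE_field_residual_sqr_le i.
have s_le : mean_field i ^+ 2 <= 2 ^+ 2.
  by apply: ler_sqr_norm; apply: le_trans (norm_mean_field_le i) a_le2.
have s_ge0 := sqr_ge0 (mean_field i).
move: (E _) (mean_field i ^+ 2) e_ge0 e_le s_le s_ge0 => e s e_ge0 e_le s_le s_ge0.
have e2 : e * e <= (6 * alpha) * (6 * alpha) by apply: ler_pM.
have s2 : s * s <= 4 * s by rewrite ler_wpM2r // (le_trans s_le) // expr2 -natrM.
have key : 4 * (e + s) ^+ 2 <= 288 * (alpha ^+ 2 + s).
  by have := sqr_ge0 (e - s); rewrite !expr2; nra.
have -> : (2 / (1 - lam) * (e + s)) ^+ 2 = 4 * (e + s) ^+ 2 / (1 - lam) ^+ 2.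
  by field; rewrite gt_eqF.
by rewrite [leRHS]mulrAC; apply: ler_wpM2r; rewrite // invr_ge0 exprn_ge0 // ltW.
Qed.

Lemma sum_second_moment_sqr_le :
  \sum_(i < n) second_moment i ^+ 2 <=
  288 / (1 - lam) ^+ 4 * (n%:R * alpha ^+ 2 + \sum_(i < n) mean_field i ^+ 2).
Proof.
set q := fun i => 2 / (1 - lam) * (E (fun w => field_residual w i ^+ 2) + mean_field i ^+ 2).
have kappa_ge0 : 0 <= a * beta ^+ 2 / lam.
  by apply: divr_ge0; [rewrite mulr_ge0 ?sqr_ge0 | exact: ltW].
apply: le_trans (sum_sqr_le_contraction (y := q) lam01 _ _) _.
- move=> i; rewrite (ger0_norm (second_moment_ge0 i)).
  apply: le_trans (second_moment_le i) _; rewrite lerD ?ler_norm //.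
  exact: ler_norm.
- under eq_bigr do rewrite exprMn; rewrite -mulr_sumr.
  apply: le_trans (ler_wpM2l (sqr_ge0 _) (sum_sqr_matrix_le second_moment)) _.
  rewrite mulrA; apply: ler_wpM2r; first by rewrite sumr_ge0 // => i _; rewrite sqr_ge0.
  rewrite -exprMn; apply: ler_sqr_norm; rewrite (ger0_norm (mulr_ge0 kappa_ge0 a_ge0)).
  have ba2 : (beta * a) ^+ 2 <= lam ^+ 2.
    by apply: ler_sqr_norm; rewrite ger0_norm ?mulr_ge0.
  have -> : a * beta ^+ 2 / lam * a = (beta * a) ^+ 2 / lam by rewrite exprMn; ring.
  by rewrite ler_pdivrMr // -expr2.
rewrite (_ : 288 / _ = 288 / (1 - lam) ^+ 2 / (1 - lam) ^+ 2); last first.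
  by rewrite -mulrA -invfM -exprD.
rewrite [leRHS]mulrAC; apply: ler_wpM2r; first by rewrite invr_ge0 exprn_ge0 ?ltW.
apply: le_trans (ler_sum _ (fun i _ => moment_source_sqr_le i)) _.
by rewrite -mulr_sumr big_split /= sumr_const card_ord -[alpha ^+ 2 *+ n]mulr_natl.
Qed.

Definition mean_bias i : R := E (fun w => spin_at w i) - tanh (h i).

Lemma gibbsE_spin_at i : E (fun w => spin_at w i) = E (fun w => cond_mean beta A h w i).
Proof.
have split_spin w : spin_at w i = U w i * 1 + cond_mean beta A h w i.
  by rewrite mulr1 /residual subrK.
by rewrite (gibbsE_ext split_spin) gibbsED gibbsE_residual_mul // add0r.
Qed.

Lemma gibbsE_local_field i :
  E (fun w => m w i) = mean_field i + \sum_(j < n) A i j * mean_bias j.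
Proof.
rewrite /local_field gibbsE_sum /mean_field -big_split /=.
by apply: eq_bigr => j _; rewrite gibbsEZ /mean_bias; ring.
Qed.

(* Taylor expansion of [tanh] around [h i]: the bias of spin [i] is the
   linear response [(1 - tanh^2) beta E m_i] up to [2 E m_i^2]. *)
Lemma norm_mean_bias_le i : `|mean_bias i| <=
  `|beta * \sum_(j < n) A i j * mean_bias j| + `|beta * `|mean_field i| + 2 * second_moment i|.
Proof.
pose t := tanh (h i).
pose r w := cond_mean beta A h w i - t - (1 - t ^+ 2) * (beta * m w i).
have r_le w : `|r w| <= 2 * m w i ^+ 2.
  rewrite /r /cond_mean /t (addrC (beta * _)).
  apply: le_trans (tanh_taylor _ _) _; rewrite ler_wpM2l // exprMn ler_piMl ?sqr_ge0 //.
  by rewrite expr2 mulr_ile1.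
have t2 : `|1 - t ^+ 2| <= 1.
  have := tanh_norm_le1 (h i); rewrite -/t !ler_norml => /andP[? ?].
  by apply/andP; split; nra.
have tE : tanh (h i) = t by [].
clearbody t.
have split_mean w : cond_mean beta A h w i = (1 - t ^+ 2) * beta * m w i + (r w + t).
  by rewrite /r; ring.
clearbody r.
have -> : mean_bias i = (1 - t ^+ 2) * beta * E (fun w => m w i) + E r.
  rewrite /mean_bias gibbsE_spin_at (gibbsE_ext split_mean).
  by rewrite gibbsED gibbsEZ gibbsED gibbsE_cst tE; ring.
have Er_le : `|E r| <= 2 * second_moment i.
  by apply: le_trans (norm_gibbsE_le _) _; rewrite /second_moment -gibbsEZ; exact: ler_gibbsE.
rewrite (ger0_norm (_ : 0 <= beta * `|mean_field i| + 2 * second_moment i)); last first.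
  by apply: addr_ge0; apply: mulr_ge0; rewrite ?second_moment_ge0.
rewrite gibbsE_local_field; apply: le_trans (ler_normD _ _) _; rewrite addrA lerD //.
rewrite !normrM (ger0_norm beta_ge0).
apply: le_trans (_ : _ <= beta * `|mean_field i + \sum_(j < n) A i j * mean_bias j|) _.
  by rewrite -mulrA ler_piMl ?mulr_ge0.
rewrite -mulrDr ler_wpM2l // addrC; exact: ler_normD.
Qed.

Lemma sum_mean_bias_sqr_le :
  \sum_(i < n) mean_bias i ^+ 2 <=
  2306 / (1 - lam) ^+ 6 * (n%:R * alpha ^+ 2 + \sum_(i < n) mean_field i ^+ 2).
Proof.
have S_le := sum_second_moment_sqr_le.
move: S_le; set X := n%:R * alpha ^+ 2 + _ => S_le.
have X_ge0 : 0 <= X.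
  rewrite /X addr_ge0 ?mulr_ge0 ?sqr_ge0 //.
  by apply: sumr_ge0 => i _; rewrite sqr_ge0.
set y := fun i => beta * `|mean_field i| + 2 * second_moment i.
have y_le : \sum_(i < n) y i ^+ 2 <= 2 * X + 8 * \sum_(i < n) second_moment i ^+ 2.
  apply: le_trans (_ : _ <= \sum_(i < n) (2 * mean_field i ^+ 2 + 8 * second_moment i ^+ 2)) _.
    apply: ler_sum => i _; apply: le_trans (sqrD_le2 _ _) _.
    have : (beta * `|mean_field i|) ^+ 2 <= mean_field i ^+ 2.
      by rewrite exprMn real_normK ?num_real // ler_piMl ?sqr_ge0 // expr2 mulr_ile1.
    by rewrite exprMn; lra.
  rewrite big_split /= -!mulr_sumr lerD2r ler_pM2l // /X lerDr.
  by rewrite mulr_ge0 ?sqr_ge0.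
apply: le_trans (sum_sqr_le_contraction (y := y) lam01 norm_mean_bias_le _) _.
  under eq_bigr do rewrite exprMn; rewrite -mulr_sumr.
  apply: le_trans (ler_wpM2l (sqr_ge0 _) (sum_sqr_matrix_le mean_bias)) _.
  rewrite mulrA; apply: ler_wpM2r; first by rewrite sumr_ge0 // => i _; rewrite sqr_ge0.
  by rewrite -exprMn ler_sqr_norm // ger0_norm ?mulr_ge0.
apply: le_trans (ler_wpM2r _ y_le) _; first by rewrite invr_ge0 exprn_ge0 // ltW.
have u_ge1 : 1 <= (1 - lam)^-1 by rewrite invf_ge1 // lerBlDr lerDl ltW.
move: S_le; rewrite -!exprVn; move: ((1 - lam)^-1) u_ge1 (\sum_(i < n) _) => u u_ge1 S S_le.
have u2_le : u ^+ 2 <= u ^+ 6 by exact: ler_weXn2l.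
have S8 : 8 * S * u ^+ 2 <= 2304 * u ^+ 6 * X.
  apply: le_trans (ler_wpM2r (exprn_ge0 2 (le_trans ler01 u_ge1)) (ler_wpM2l _ S_le)) _ => //.
  by rewrite (_ : 6 = 4 + 2)%N // exprD; lra.
have X2 : 2 * X * u ^+ 2 <= 2 * u ^+ 6 * X by nra.
by rewrite mulrDl; lra.
Qed.

Lemma gibbsE_weighted_spin_bias (d : 'I_n -> R) :
  E (fun w => \sum_(i < n) d i * (spin_at w i - tanh (h i))) = \sum_(i < n) d i * mean_bias i.
Proof.
rewrite gibbsE_sum; apply: eq_bigr => i _.
by rewrite gibbsEZ gibbsEB gibbsE_cst.
Qed.

End MomentBounds.

Section RFIM.
Variable R : realType.

Lemma norm_sum_mul_le n (d x : 'I_n -> R) :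
  `|\sum_(i < n) d i * x i| <= Num.sqrt (\sum_(i < n) d i ^+ 2) * Num.sqrt (\sum_(i < n) x i ^+ 2).
Proof.
rewrite -sqrtrM ?sumr_ge0 // => [|i _]; last exact: sqr_ge0.
by rewrite -sqrtr_sqr ler_wsqrtr // cauchy_schwarz.
Qed.

Lemma sqrt_mulD_le (C x y : R) : 1 <= C -> 0 <= x -> 0 <= y ->
  Num.sqrt (C * (x + y)) <= C * (1 + Num.sqrt x + Num.sqrt y).
Proof.
move=> C_ge1 x_ge0 y_ge0; have C_ge0 : 0 <= C by rewrite (le_trans ler01).
have sqrtD : Num.sqrt (x + y) <= Num.sqrt x + Num.sqrt y.
  rewrite -[leRHS]ger0_norm ?addr_ge0 ?sqrtr_ge0 // -sqrtr_sqr ler_wsqrtr //.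
  by rewrite sqrrD !sqr_sqrtr //; have := mulr_ge0 (sqrtr_ge0 x) (sqrtr_ge0 y); lra.
apply: le_trans (_ : Num.sqrt (C ^+ 2 * (x + y)) <= _).
  by rewrite ler_wsqrtr // ler_wpM2r ?addr_ge0 // expr2 ler_peMl.
rewrite sqrtrM ?sqr_ge0 // sqrtr_sqr ger0_norm //; apply: ler_wpM2l => //.
by apply: le_trans sqrtD _; lra.
Qed.

Lemma row_sum_le_infnorm n (A : 'M[R]_n) i :
  (forall i j, 0 <= A i j) -> \sum_(j < n) A i j <= infnorm A.
Proof.
move=> A_ge0; rewrite (eq_bigr (fun j => `|A i j|)) => [|j _]; last by rewrite ger0_norm.
exact: (le_bigmax _ (fun i => \sum_(j < n) `|A i j|)).
Qed.

Lemma mloc_local_field n (A : 'M[R]_n) w i :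
  A i i = 0 -> mloc A w i = local_field A w i.
Proof. by move=> Aii; rewrite (local_field_split w i i) Aii mul0r addr0. Qed.

Definition rfim_const (lam : R) : R := 2306 / (1 - lam) ^+ 6.

Lemma rfim_const_bounds (lam : R) : 0 < lam < 1 ->
  1 <= rfim_const lam /\ 12 / (1 - lam) ^+ 2 <= rfim_const lam.
Proof.
case/andP=> lam_gt0 lam_lt1.
have u_ge1 : 1 <= (1 - lam)^-1 by rewrite invf_ge1 ?subr_gt0 // lerBlDr lerDl ltW.
rewrite /rfim_const -!exprVn; move: ((1 - lam)^-1) u_ge1 => u u_ge1.
have u2_le : u ^+ 2 <= u ^+ 6 by exact: ler_weXn2l.
have u6_ge1 : 1 <= u ^+ 6 by rewrite exprn_ege1.
split; lra.
Qed.

Lemma rfim_moment_bounds n (A : 'M[R]_n) (beta lam : R) d (theta : 'rV[R]_d)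
    (X : 'I_n -> 'rV[R]_d) :
  admissible A -> 0 <= beta -> beta <= 1 -> 0 < lam < 1 ->
  infnorm A <= 2 -> beta * infnorm A <= lam ->
  rfim_E beta A theta X (fun w => \sum_(i < n) (mloc A w i) ^+ 2)
    <= rfim_const lam * (n%:R * alphaA A + C1 A theta X)
  /\ forall dv : 'I_n -> R,
    `| rfim_E beta A theta X
         (fun w => \sum_(i < n) dv i * (spin R (w i) - tanh (dotp theta (X i)))) |
    <= rfim_const lam * enorm dv * (1 + Num.sqrt (n%:R * alphaA A ^+ 2)
                                     + Num.sqrt (C1 A theta X)).
Proof.
move=> [A_symT [A_ge0 A_diag]] beta_ge0 beta_le1 lam01 a_le2 beta_a_le.
have A_sym i j : A i j = A j i by rewrite -[in LHS]A_symT mxE.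
pose h i := dotp theta (X i).
have rfimE : rfim_E beta A theta X = gibbsE beta A h by [].
have row_sum i : \sum_(j < n) A i j <= infnorm A by exact: row_sum_le_infnorm.
have row_sqr i : \sum_(j < n) A i j ^+ 2 <= alphaA A.
  exact: (le_bigmax _ (fun i => \sum_(j < n) A i j ^+ 2)).
have a_ge0 : 0 <= infnorm A by exact: bigmax_ge_id.
have alpha_ge0 : 0 <= alphaA A by exact: bigmax_ge_id.
have [C_ge1 C_ge12] := rfim_const_bounds lam01.
have C1_ge0 : 0 <= C1 A theta X by apply: sumr_ge0 => i _; exact: sqr_ge0.
split.
  rewrite rfimE (_ : gibbsE _ _ _ _ =
                     gibbsE beta A h (fun w => \sum_(i < n) local_field A w i ^+ 2)).
    apply: le_trans (gibbsE_sum_local_field_sqr_le h A_sym A_diag A_ge0 beta_ge0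
                       row_sum row_sqr a_ge0 alpha_ge0 lam01 beta_a_le) _.
    by rewrite ler_wpM2r // addr_ge0 ?mulr_ge0.
  by apply: gibbsE_ext => w; apply: eq_bigr => i _; rewrite mloc_local_field.
move=> dv.
rewrite rfimE (gibbsE_weighted_spin_bias beta A h).
apply: le_trans (norm_sum_mul_le _ _) _.
rewrite /enorm [leRHS]mulrAC [leRHS]mulrC; apply: ler_wpM2l; first exact: sqrtr_ge0.
apply: le_trans (sqrt_mulD_le C_ge1 _ C1_ge0); last by rewrite mulr_ge0 ?sqr_ge0.
rewrite ler_wsqrtr //.
exact: (sum_mean_bias_sqr_le h A_sym A_diag A_ge0 beta_ge0 row_sum row_sqr
          a_ge0 alpha_ge0 lam01 beta_a_le beta_le1 a_le2).
Qed.

End RFIM.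

Lemma cvg1_eventually_bounds (R : realType) (beta : R) (u : nat -> R) :
  0 <= beta < 1 -> u @ \oo --> (1 : R) ->
  exists N, forall n, (N <= n)%N -> u n <= 2 /\ beta * u n <= (1 + beta) / 2.
Proof.
case/andP=> beta_ge0 beta_lt1 /cvgrPdist_lt /(_ ((1 - beta) / 2)).
have eps_gt0 : 0 < (1 - beta) / 2 by lra.
case/(_ eps_gt0) => N _ near_u; exists N => n Nn.
have := near_u n Nn; rewrite ltr_norml => /andP[u_lt _].
split; first lra.
have u_le : u n <= 1 + (1 - beta) / 2 by lra.
apply: le_trans (ler_wpM2l beta_ge0 u_le) _; nra.
Qed.

Theorem mainTheorem13 (R : realType) (beta : R) (hb0 : 0 <= beta) (hb1 : beta < 1) :
  exists C : R, 0 < C /\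
  forall (A : forall n : nat, 'M[R]_n),
    (forall n, admissible (A n)) ->
    ((fun n => infnorm (A n)) @ \oo --> (1 : R)) ->
    exists N : nat, forall n : nat, (N <= n)%N ->
      forall (d : nat) (theta : 'rV[R]_d) (X : 'I_n -> 'rV[R]_d),
        rfim_E beta (A n) theta X (fun w => \sum_(i < n) (mloc (A n) w i) ^+ 2)
          <= C * (n%:R * alphaA (A n) + C1 (A n) theta X)
        /\
        forall dv : 'I_n -> R,
          `| rfim_E beta (A n) theta X
               (fun w => \sum_(i < n) dv i * (spin R (w i) - tanh (dotp theta (X i)))) |
          <= C * enorm dv * (1 + Num.sqrt (n%:R * alphaA (A n) ^+ 2)
                               + Num.sqrt (C1 (A n) theta X)).
Proof.
pose lam := (1 + beta) / 2.
have lam01 : 0 < lam < 1 by apply/andP; split; rewrite /lam; lra.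
have [C_ge1 _] := rfim_const_bounds lam01.
exists (rfim_const lam); split; first exact: lt_le_trans ltr01 C_ge1.
move=> A A_adm A_cvg.
have beta01 : 0 <= beta < 1 by rewrite hb0 hb1.
have [N N_bound] := cvg1_eventually_bounds beta01 A_cvg.
exists N => n Nn d theta X; have [a_le2 beta_a_le] := N_bound n Nn.
exact: rfim_moment_bounds (A_adm n) hb0 (ltW hb1) lam01 a_le2 beta_a_le.
Qed.
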